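(* Let $r>2$ and $p(z_1,z_2)=1-\frac{z_1+z_2}{r}$. For $(k_1,k_2)\in\mathbb{Z}^2$ let $$c_{k_1,k_2}=\frac{1}{4\pi^2}\int_0^{2\pi}\!\!\int_0^{2\pi}\frac{e^{-i(k_1\theta_1+k_2\theta_2)}}{|p(e^{i\theta_1},e^{i\theta_2})|^2}\,d\theta_1\,d\theta_2$$ be the Fourier coefficients of the spectral density function $1/|p|^2$ on the torus $\mathbb{T}^2$. Then $$c_{k_1,k_2}=\frac{1}{\sqrt{1-\frac{4}{r^2}}}\left(\frac r2-\sqrt{\frac{r^2}{4}-1}\right)^{|k_1|+|k_2|}\quad\text{if } k_1k_2\le 0,$$ and $$c_{k_1,k_2}=\frac{\binom{|k_1|+|k_2|}{|k_1|}}{r^{|k_1|+|k_2|}}\;{}_3F_2\!\left(\begin{matrix}1,\ \frac{|k_1|+|k_2|}{2}+1,\ \frac{|k_1|+|k_2|+1}{2}\\ |k_1|+1,\ |k_2|+1\end{matrix};\frac{4}{r^2}\right)\quad\text{if } k_1k_2>0.$$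
   Context: For $|x|<1$, ${}_3F_2\!\left(\begin{matrix}a,b,c\\ d,e\end{matrix};x\right)=\sum_{n=0}^\infty\frac{(a)_n(b)_n(c)_n}{(d)_n(e)_n}\frac{x^n}{n!}$, where $(q)_0=1$ and $(q)_n=q(q+1)\cdots(q+n-1)$ for $n\ge1$ (Pochhammer symbol). $\mathbb{T}=\{w\in\mathbb{C}:|w|=1\}$. *)

From Stdlib Require Import Reals ZArith.
From Coquelicot Require Import Coquelicot.
Open Scope R_scope.

Definition expi (t : R) : C := (cos t, sin t).

Definition p_poly (r : R) (z1 z2 : C) : C :=
  Cminus (RtoC 1) (Cdiv (Cplus z1 z2) (RtoC r)).

Definition spec_density (r t1 t2 : R) : R :=
  / (Cmod (p_poly r (expi t1) (expi t2)) ^ 2).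

(* Fourier coefficient c_{k1,k2}, as an iterated Riemann integral
   (the integrand is continuous on [0,2pi]^2 since r > 2). *)
Definition fourier_coef (r : R) (k1 k2 : Z) : C :=
  Cmult (RtoC (/ (4 * PI ^ 2)))
    (RInt (V := C_R_CompleteNormedModule)
      (fun t1 => RInt (V := C_R_CompleteNormedModule)
         (fun t2 => Cmult (expi (- (IZR k1 * t1 + IZR k2 * t2)))
                          (RtoC (spec_density r t1 t2)))
         0 (2 * PI))
      0 (2 * PI)).

Fixpoint poch (q : R) (n : nat) : R :=
  match n with
  | O => 1
  | S m => poch q m * (q + INR m)
  end.

Definition hyp3F2 (a b c d e x : R) : R :=
  Series (fun n => poch a n * poch b n * poch c n / (poch d n * poch e n)
                   * x ^ n / INR (fact n)).

From Stdlib Require Import Reals ZArith Lra Lia.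
From Coquelicot Require Import Coquelicot.
Open Scope R_scope.

(* With u = (z1 + z2) / r we have |u| <= 2/r < 1 on the torus, so 1/|p|^2 = |sum_m u^m|^2 is
   the uniform limit of |sum_(m<N) u^m|^2.  The Fourier coefficient of
   (z1 + z2)^m conj(z1 + z2)^n at (k1, k2) is C(m+n, n+k1) if m - n = k1 + k2 and 0 otherwise,
   hence c_(k1,k2) = sum_s C(2s+D, s+j) / r^(2s+D) with D = |k1 + k2| and j = +-k1.
   If k1 k2 > 0 this is, term by term, the 3F2 series.  If k1 k2 <= 0 it equals
   h_K = sum_s C(2s+K, s) / r^(2s+K) with K = |k1| + |k2|.  Pascal's rule gives
   r h_(K+1) = h_K + h_(K+2) and h_0 = 1 + (2/r) h_1; as h decays geometrically, this forces
   h_(K+1) = rho h_K for the small root rho = r/2 - sqrt(r^2/4 - 1) of rho^2 - r rho + 1, and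
   then h_K = rho^K / sqrt(1 - 4/r^2). *)

(** * Integrals over a period and over the torus *)

Notation CV := C_R_CompleteNormedModule.

Lemma expi_add a b : (expi a * expi b)%C = expi (a + b).
Proof. unfold expi, Cmult; simpl. rewrite cos_plus, sin_plus. f_equal; ring. Qed.

Lemma Cmod_expi t : Cmod (expi t) = 1.
Proof.
  unfold Cmod, expi; simpl. rewrite !Rmult_1_r, <- sqrt_1. f_equal.
  pose proof (sin2_cos2 t) as H. unfold Rsqr in H. lra.
Qed.

Lemma Cconj_expi t : Cconj (expi t) = expi (- t).
Proof. unfold Cconj, expi; simpl. rewrite cos_neg, sin_neg. reflexivity. Qed.

Lemma sin_period_IZR x (j : Z) : sin (x + 2 * IZR j * PI) = sin x.
Proof.
  destruct (Z_le_gt_dec 0 j) as [Hj|Hj].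
  - rewrite <- (Z2Nat.id j Hj), <- INR_IZR_INZ. apply sin_period.
  - rewrite <- (sin_period _ (Z.to_nat (- j))). f_equal.
    rewrite INR_IZR_INZ, Z2Nat.id, opp_IZR by lia. ring.
Qed.

Lemma is_RInt_cos_period (j : Z) (c : R) : j <> 0%Z ->
  is_RInt (fun t => cos (IZR j * t + c)) 0 (2 * PI) 0.
Proof.
  intros Hj. apply not_0_IZR in Hj.
  set (F := fun t => sin (IZR j * t + c) / IZR j).
  assert (HF : minus (F (2 * PI)) (F 0) = 0).
  { unfold F, minus, plus, opp; simpl.
    replace (IZR j * (2 * PI) + c) with (c + 2 * IZR j * PI) by ring.
    rewrite Rmult_0_r, Rplus_0_l, sin_period_IZR. field. exact Hj. }
  enough (H : is_RInt (fun t => cos (IZR j * t + c)) 0 (2 * PI) (minus (F (2 * PI)) (F 0)))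
    by (rewrite HF in H; exact H).
  apply (is_RInt_derive (V := R_CompleteNormedModule)).
  - intros t _. unfold F. auto_derive; auto. field. exact Hj.
  - intros t _. apply continuous_cos_comp.
    apply (ex_derive_continuous (fun t => IZR j * t + c)). auto_derive. auto.
Qed.

Lemma is_RInt_sin_period (j : Z) (c : R) : j <> 0%Z ->
  is_RInt (fun t => sin (IZR j * t + c)) 0 (2 * PI) 0.
Proof.
  intros Hj. apply (is_RInt_ext (fun t => cos (IZR j * t + (c - PI / 2)))).
  - intros t _. rewrite <- cos_shift, <- cos_neg. f_equal. ring.
  - exact (is_RInt_cos_period j _ Hj).
Qed.

Lemma is_RInt_C (f : R -> C) a b (l : C) :
  is_RInt (fun t => fst (f t)) a b (fst l) -> is_RInt (fun t => snd (f t)) a b (snd l) ->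
  is_RInt (V := CV) f a b l.
Proof. destruct l as [x y]. exact (is_RInt_fct_extend_pair f a b x y). Qed.

Lemma is_RInt_expi_period (j : Z) (c : R) : j <> 0%Z ->
  is_RInt (V := CV) (fun t => expi (IZR j * t + c)) 0 (2 * PI) (RtoC 0).
Proof.
  intros Hj. apply is_RInt_C; simpl.
  - exact (is_RInt_cos_period j c Hj).
  - exact (is_RInt_sin_period j c Hj).
Qed.

Lemma is_RInt_C_const (c : C) : is_RInt (V := CV) (fun _ => c) 0 (2 * PI) (2 * PI * c)%C.
Proof.
  replace (2 * PI * c)%C with (scal (2 * PI - 0) c).
  - apply (is_RInt_const (V := CV)).
  - rewrite scal_R_Cmult, Rminus_0_r, RtoC_mult. reflexivity.
Qed.

Lemma is_RInt_Cmult_l (f : R -> C) a b (c l : C) :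
  is_RInt (V := CV) f a b l -> is_RInt (V := CV) (fun t => c * f t)%C a b (c * l)%C.
Proof.
  intros H. destruct c as [c1 c2].
  pose proof (is_RInt_fct_extend_fst f a b l H) as H1.
  pose proof (is_RInt_fct_extend_snd f a b l H) as H2.
  apply is_RInt_C; simpl.
  - eapply is_RInt_ext; [| exact (is_RInt_minus _ _ a b _ _ (is_RInt_scal _ a b c1 _ H1)
                                                 (is_RInt_scal _ a b c2 _ H2))].
    intros t _. reflexivity.
  - eapply is_RInt_ext; [| exact (is_RInt_plus _ _ a b _ _ (is_RInt_scal _ a b c1 _ H2)
                                                (is_RInt_scal _ a b c2 _ H1))].
    intros t _. reflexivity.
Qed.

Definition is_RInt_torus (f : R -> R -> C) (I : C) :=
  exists F : R -> C, (forall t1, is_RInt (V := CV) (f t1) 0 (2 * PI) (F t1)) /\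
                     is_RInt (V := CV) F 0 (2 * PI) I.

Lemma is_RInt_torus_ext f g I :
  (forall t1 t2, f t1 t2 = g t1 t2) -> is_RInt_torus f I -> is_RInt_torus g I.
Proof.
  intros E [F [HF HI]]. exists F. split; [|exact HI].
  intros t1. eapply is_RInt_ext; [|apply HF]. intros t2 _. apply E.
Qed.

Lemma is_RInt_torus_plus f g I J :
  is_RInt_torus f I -> is_RInt_torus g J ->
  is_RInt_torus (fun t1 t2 => f t1 t2 + g t1 t2)%C (I + J)%C.
Proof.
  intros [F [HF HI]] [G [HG HJ]]. exists (fun t1 => F t1 + G t1)%C. split.
  - intros t1. exact (is_RInt_plus _ _ _ _ _ _ (HF t1) (HG t1)).
  - exact (is_RInt_plus _ _ _ _ _ _ HI HJ).
Qed.

Lemma is_RInt_torus_Cmult_l f I c :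
  is_RInt_torus f I -> is_RInt_torus (fun t1 t2 => c * f t1 t2)%C (c * I)%C.
Proof.
  intros [F [HF HI]]. exists (fun t1 => c * F t1)%C. split.
  - intros t1. exact (is_RInt_Cmult_l _ _ _ c _ (HF t1)).
  - exact (is_RInt_Cmult_l _ _ _ c _ HI).
Qed.

Lemma is_RInt_torus_expi (k1 k2 : Z) :
  is_RInt_torus (fun t1 t2 => expi (- (IZR k1 * t1 + IZR k2 * t2)))
    (RtoC (4 * PI ^ 2 * (if (Z.eqb k1 0 && Z.eqb k2 0)%bool then 1 else 0))).
Proof.
  destruct (Z.eq_dec k2 0) as [->|Hk2]; [destruct (Z.eq_dec k1 0) as [->|Hk1]|].
  - exists (fun _ => 2 * PI * RtoC 1)%C. split.
    + intros t1. eapply is_RInt_ext; [|apply is_RInt_C_const].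
      intros t2 _. unfold expi. rewrite !Rmult_0_l, Rplus_0_l, Ropp_0, cos_0, sin_0.
      reflexivity.
    + replace (RtoC (4 * PI ^ 2 * _)) with (2 * PI * (2 * PI * RtoC 1))%C.
      * apply is_RInt_C_const.
      * unfold Cmult, RtoC; simpl. f_equal; ring.
  - exists (fun t1 => 2 * PI * expi (IZR (- k1) * t1 + 0))%C. split.
    + intros t1. eapply is_RInt_ext; [|apply is_RInt_C_const].
      intros t2 _. rewrite opp_IZR. f_equal. ring.
    + replace (RtoC (4 * PI ^ 2 * _)) with (2 * PI * RtoC 0)%C.
      * apply is_RInt_Cmult_l, is_RInt_expi_period. lia.
      * apply Z.eqb_neq in Hk1. rewrite Hk1. unfold Cmult, RtoC; simpl. f_equal; ring.
  - exists (fun _ => RtoC 0). split.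
    + intros t1. eapply is_RInt_ext; [|apply (is_RInt_expi_period (- k2) (- (IZR k1 * t1)))].
      * intros t2 _. rewrite opp_IZR. f_equal. ring.
      * lia.
    + replace (RtoC (4 * PI ^ 2 * _)) with (2 * PI * RtoC 0)%C.
      * apply is_RInt_C_const.
      * apply Z.eqb_neq in Hk2. rewrite Hk2, Bool.andb_false_r.
        unfold Cmult, RtoC; simpl. f_equal; ring.
Qed.

(** * Fourier coefficients of trigonometric monomials *)

Fixpoint binz (M : nat) (K : Z) : R :=
  match M with
  | O => if Z.eqb K 0 then 1 else 0
  | S M' => binz M' K + binz M' (K - 1)
  end.

Lemma binz_neg M K : (K < 0)%Z -> binz M K = 0.
Proof.
  revert K; induction M as [|M IH]; intros K HK; simpl.
  - destruct (Z.eqb_spec K 0); [lia | reflexivity].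
  - rewrite !IH by lia. ring.
Qed.

Lemma binz_gt M K : (Z.of_nat M < K)%Z -> binz M K = 0.
Proof.
  revert K; induction M as [|M IH]; intros K HK; simpl.
  - destruct (Z.eqb_spec K 0); [lia | reflexivity].
  - rewrite !IH by lia. ring.
Qed.

Lemma binz_bounds M K : 0 <= binz M K <= 2 ^ M.
Proof.
  revert K; induction M as [|M IH]; intros K; simpl.
  - destruct (Z.eqb K 0); lra.
  - pose proof (IH K). pose proof (IH (K - 1)%Z). lra.
Qed.

Lemma binz_sym M K : binz M K = binz M (Z.of_nat M - K).
Proof.
  revert K; induction M as [|M IH]; intros K; cbn [binz].
  - destruct (Z.eqb_spec K 0), (Z.eqb_spec (Z.of_nat 0 - K) 0); lia || reflexivity.
  - rewrite (IH K), (IH (K - 1)%Z), Rplus_comm. f_equal; f_equal; lia.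
Qed.

Lemma binz_binomial M k : (k <= M)%nat -> binz M (Z.of_nat k) = Binomial.C M k.
Proof.
  revert k; induction M as [|M IH]; intros k Hk.
  - replace k with 0%nat by lia. rewrite C_n_0. reflexivity.
  - simpl binz. destruct k as [|k].
    + rewrite (binz_neg M (Z.of_nat 0 - 1)), IH, !C_n_0 by lia. ring.
    + replace (Z.of_nat (S k) - 1)%Z with (Z.of_nat k) by lia.
      rewrite (IH k) by lia.
      destruct (Nat.eq_dec k M) as [->|Hne].
      * rewrite binz_gt, !C_n_n by lia. ring.
      * rewrite (IH (S k)), <- pascal by lia. ring.
Qed.

Definition trig_mono (m n : nat) (k1 k2 : Z) (t1 t2 : R) : C :=
  (expi (- (IZR k1 * t1 + IZR k2 * t2)) * Cpow (expi t1 + expi t2) m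
     * Cpow (expi (- t1) + expi (- t2)) n)%C.

Definition trig_coef (m n : nat) (k1 k2 : Z) : R :=
  if Z.eqb (Z.of_nat m - Z.of_nat n) (k1 + k2) then binz (m + n) (Z.of_nat n + k1) else 0.

Lemma trig_coef_0_0 k1 k2 :
  trig_coef 0 0 k1 k2 = if (Z.eqb k1 0 && Z.eqb k2 0)%bool then 1 else 0.
Proof.
  unfold trig_coef. cbn [binz Nat.add].
  destruct (Z.eqb_spec (Z.of_nat 0 - Z.of_nat 0) (k1 + k2)),
    (Z.eqb_spec (Z.of_nat 0 + k1) 0), (Z.eqb_spec k1 0), (Z.eqb_spec k2 0);
    simpl; lia || reflexivity.
Qed.

Lemma trig_coef_S_l m n k1 k2 :
  trig_coef (S m) n k1 k2 = trig_coef m n (k1 - 1) k2 + trig_coef m n k1 (k2 - 1).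
Proof.
  unfold trig_coef. rewrite Nat2Z.inj_succ.
  destruct (Z.eqb_spec (Z.succ (Z.of_nat m) - Z.of_nat n) (k1 + k2)),
    (Z.eqb_spec (Z.of_nat m - Z.of_nat n) (k1 - 1 + k2)),
    (Z.eqb_spec (Z.of_nat m - Z.of_nat n) (k1 + (k2 - 1))); try lia.
  - simpl. replace (Z.of_nat n + (k1 - 1))%Z with (Z.of_nat n + k1 - 1)%Z by ring. ring.
  - ring.
Qed.

Lemma trig_coef_0_S n k1 k2 :
  trig_coef 0 (S n) k1 k2 = trig_coef 0 n (k1 + 1) k2 + trig_coef 0 n k1 (k2 + 1).
Proof.
  unfold trig_coef. rewrite Nat2Z.inj_succ.
  destruct (Z.eqb_spec (Z.of_nat 0 - Z.succ (Z.of_nat n)) (k1 + k2)),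
    (Z.eqb_spec (Z.of_nat 0 - Z.of_nat n) (k1 + 1 + k2)),
    (Z.eqb_spec (Z.of_nat 0 - Z.of_nat n) (k1 + (k2 + 1))); try lia.
  - simpl. replace (Z.of_nat n + (k1 + 1))%Z with (Z.succ (Z.of_nat n) + k1)%Z by ring.
    replace (Z.of_nat n + k1)%Z with (Z.succ (Z.of_nat n) + k1 - 1)%Z by ring. ring.
  - ring.
Qed.

Lemma trig_mono_S_l m n k1 k2 t1 t2 :
  trig_mono (S m) n k1 k2 t1 t2 =
  (trig_mono m n (k1 - 1) k2 t1 t2 + trig_mono m n k1 (k2 - 1) t1 t2)%C.
Proof.
  unfold trig_mono. rewrite !minus_IZR.
  replace (- ((IZR k1 - 1) * t1 + IZR k2 * t2)) with (- (IZR k1 * t1 + IZR k2 * t2) + t1)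
    by ring.
  replace (- (IZR k1 * t1 + (IZR k2 - 1) * t2)) with (- (IZR k1 * t1 + IZR k2 * t2) + t2)
    by ring.
  rewrite <- !expi_add. simpl Cpow. ring.
Qed.

Lemma trig_mono_0_S n k1 k2 t1 t2 :
  trig_mono 0 (S n) k1 k2 t1 t2 =
  (trig_mono 0 n (k1 + 1) k2 t1 t2 + trig_mono 0 n k1 (k2 + 1) t1 t2)%C.
Proof.
  unfold trig_mono. rewrite !plus_IZR.
  replace (- ((IZR k1 + 1) * t1 + IZR k2 * t2)) with (- (IZR k1 * t1 + IZR k2 * t2) + - t1)
    by ring.
  replace (- (IZR k1 * t1 + (IZR k2 + 1) * t2)) with (- (IZR k1 * t1 + IZR k2 * t2) + - t2)
    by ring.
  rewrite <- !expi_add. simpl Cpow. ring.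
Qed.

Lemma is_RInt_torus_trig_mono m n k1 k2 :
  is_RInt_torus (trig_mono m n k1 k2) (RtoC (4 * PI ^ 2 * trig_coef m n k1 k2)).
Proof.
  revert n k1 k2. induction m as [|m IHm]; [induction n as [|n IHn]|]; intros k1 k2.
  - rewrite trig_coef_0_0. eapply is_RInt_torus_ext; [|apply is_RInt_torus_expi].
    intros t1 t2. unfold trig_mono. simpl. ring.
  - rewrite trig_coef_0_S, Rmult_plus_distr_l, RtoC_plus.
    eapply is_RInt_torus_ext; [|apply is_RInt_torus_plus; [apply IHn | apply IHn]].
    intros t1 t2. symmetry. apply trig_mono_0_S.
  - intros n. rewrite trig_coef_S_l, Rmult_plus_distr_l, RtoC_plus.
    eapply is_RInt_torus_ext; [|apply is_RInt_torus_plus; [apply IHm | apply IHm]].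
    intros t1 t2. symmetry. apply trig_mono_S_l.
Qed.

(** * Uniform approximation of the spectral density *)

Lemma ball_C (x y : C) (e : R) : Cmod (y - x) < e -> ball (M := CV) x e y.
Proof. intros H. apply (norm_compat1 (V := CV)). rewrite <- Cmod_norm. exact H. Qed.

Lemma filterlim_C_of_bound (u : nat -> C) (l : C) (d : nat -> R) :
  (forall n, Cmod (u n - l) <= d n) -> is_lim_seq d 0 ->
  filterlim u eventually (locally l).
Proof.
  intros Hb Hd P [e He]. apply is_lim_seq_spec in Hd. destruct (Hd e) as [N HN].
  exists N. intros n Hn. apply He, ball_C.
  specialize (HN n Hn). rewrite Rminus_0_r in HN.
  eapply Rle_lt_trans; [apply Hb|]. eapply Rle_lt_trans; [apply Rle_abs | exact HN].
Qed.

Lemma is_RInt_unif_lim (f : R -> C) (fn : nat -> R -> C) (In : nat -> C) (eps : nat -> R) a b :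
  (forall n, is_RInt (V := CV) (fn n) a b (In n)) ->
  (forall n t, Cmod (fn n t - f t) <= eps n) -> is_lim_seq eps 0 ->
  exists I, is_RInt (V := CV) f a b I /\ filterlim In eventually (locally I).
Proof.
  intros HI Hb Hl.
  destruct (filterlim_RInt (V := CV) fn a b eventually eventually_filter f In HI)
    as [I [H1 H2]].
  - intros P [e He]. apply is_lim_seq_spec in Hl. destruct (Hl e) as [N HN].
    exists N. intros n Hn. apply He. intros t. apply ball_C.
    specialize (HN n Hn). rewrite Rminus_0_r in HN.
    eapply Rle_lt_trans; [apply Hb|]. eapply Rle_lt_trans; [apply Rle_abs | exact HN].
  - exists I. split; assumption.
Qed.

Lemma Cmod_is_RInt_minus_le (f g : R -> C) a b (If Ig : C) (e : R) : a <= b ->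
  is_RInt (V := CV) f a b If -> is_RInt (V := CV) g a b Ig ->
  (forall t, Cmod (f t - g t) <= e) -> Cmod (If - Ig) <= (b - a) * e.
Proof.
  intros Hab Hf Hg He.
  rewrite Cmod_norm. apply (norm_RInt_le (V := CV) (fun t => minus (f t) (g t)) (fun _ => e) a b).
  - exact Hab.
  - intros t _. rewrite <- Cmod_norm. apply He.
  - exact (is_RInt_minus _ _ _ _ _ _ Hf Hg).
  - exact (is_RInt_const a b e).
Qed.

Lemma is_RInt_torus_unif_lim (f : R -> R -> C) (fn : nat -> R -> R -> C) (In : nat -> C)
  (eps : nat -> R) :
  (forall n, is_RInt_torus (fn n) (In n)) ->
  (forall n t1 t2, Cmod (fn n t1 t2 - f t1 t2) <= eps n) -> is_lim_seq eps 0 ->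
  filterlim In eventually
    (locally (RInt (V := CV) (fun t1 => RInt (V := CV) (f t1) 0 (2 * PI)) 0 (2 * PI))).
Proof.
  intros HI Hb Hl.
  assert (Hn : forall n t1, is_RInt (V := CV) (fn n t1) 0 (2 * PI)
                                    (RInt (V := CV) (fn n t1) 0 (2 * PI))).
  { intros n t1. destruct (HI n) as [F [HF _]].
    apply (RInt_correct (V := CV)). exists (F t1). exact (HF t1). }
  assert (Hf : forall t1, is_RInt (V := CV) (f t1) 0 (2 * PI) (RInt (V := CV) (f t1) 0 (2 * PI))).
  { intros t1.
    destruct (is_RInt_unif_lim (f t1) (fun n => fn n t1) _ eps 0 (2 * PI) (fun n => Hn n t1))
      as [I [HfI _]]; auto.
    apply (RInt_correct (V := CV)). exists I. exact HfI. }
  destruct (is_RInt_unif_lim (fun t1 => RInt (V := CV) (f t1) 0 (2 * PI))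
              (fun n t1 => RInt (V := CV) (fn n t1) 0 (2 * PI)) In
              (fun n => 2 * PI * eps n) 0 (2 * PI)) as [I [HgI HIn]].
  - intros n. destruct (HI n) as [F [HF HFI]].
    eapply is_RInt_ext; [|exact HFI].
    intros t1 _. symmetry. exact (is_RInt_unique _ _ _ _ (HF t1)).
  - intros n t1. replace (2 * PI * eps n) with ((2 * PI - 0) * eps n) by ring.
    apply (Cmod_is_RInt_minus_le (fn n t1) (f t1)); auto. pose proof PI_RGT_0. lra.
  - replace (Finite 0) with (Rbar_mult (2 * PI) 0) by (simpl; f_equal; ring).
    exact (is_lim_seq_scal_l _ _ _ Hl).
  - rewrite (is_RInt_unique _ _ _ _ HgI). exact HIn.
Qed.

Fixpoint csum (f : nat -> C) (N : nat) : C :=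
  match N with O => RtoC 0 | S n => (csum f n + f n)%C end.

Fixpoint rsum (f : nat -> R) (N : nat) : R :=
  match N with O => 0 | S n => rsum f n + f n end.

Lemma csum_ext f g N : (forall i, f i = g i) -> csum f N = csum g N.
Proof. intros H. induction N as [|N IH]; simpl; [reflexivity | rewrite IH, H; reflexivity]. Qed.

Lemma csum_mult_l z f N : (z * csum f N)%C = csum (fun i => z * f i)%C N.
Proof. induction N as [|N IH]; simpl; [ring | rewrite <- IH; ring]. Qed.

Lemma csum_mult_r z f N : (csum f N * z)%C = csum (fun i => f i * z)%C N.
Proof. induction N as [|N IH]; simpl; [ring | rewrite <- IH; ring]. Qed.

Lemma Cconj_csum f N : Cconj (csum f N) = csum (fun i => Cconj (f i)) N.
Proof.
  induction N as [|N IH]; simpl.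
  - unfold Cconj, RtoC; simpl. f_equal. ring.
  - rewrite Cplus_conj, IH. reflexivity.
Qed.

Lemma RtoC_rsum f N : RtoC (rsum f N) = csum (fun i => RtoC (f i)) N.
Proof. induction N as [|N IH]; simpl; [reflexivity | rewrite <- IH, RtoC_plus; reflexivity]. Qed.

Lemma is_RInt_torus_csum (f : nat -> R -> R -> C) (I : nat -> C) N :
  (forall i, is_RInt_torus (f i) (I i)) ->
  is_RInt_torus (fun t1 t2 => csum (fun i => f i t1 t2) N) (csum I N).
Proof.
  intros H. induction N as [|N IH]; simpl.
  - exists (fun _ => RtoC 0).
    pose proof (is_RInt_C_const (RtoC 0)) as H0. rewrite Cmult_0_r in H0.
    split; [intros; exact H0 | exact H0].
  - apply is_RInt_torus_plus; auto.
Qed.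

Lemma geom_csum_mul (u : C) N : (csum (Cpow u) N * (1 - u))%C = (1 - Cpow u N)%C.
Proof. induction N as [|N IH]; simpl; [ring | rewrite Cmult_plus_distr_r, IH; ring]. Qed.

Lemma Cmod_1_minus_bounds (z : C) : 1 - Cmod z <= Cmod (1 - z) <= 1 + Cmod z.
Proof.
  split.
  - pose proof (Cmod_triangle (1 - z) z) as H.
    replace (1 - z + z)%C with (RtoC 1) in H by ring. rewrite Cmod_1 in H. lra.
  - pose proof (Cmod_triangle 1 (- z)) as H. rewrite Cmod_1, Cmod_opp in H. exact H.
Qed.

Lemma Rabs_Cmod_geom_csum_sqr (u : C) (q : R) N : Cmod u <= q < 1 ->
  Rabs (Cmod (csum (Cpow u) N) ^ 2 - / Cmod (1 - u) ^ 2) <= 3 / (1 - q) ^ 2 * q ^ N.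
Proof.
  intros [Hu Hq].
  set (c := Cmod (1 - u)). set (w := Cmod (1 - Cpow u N)).
  assert (Hq0 : 0 <= q) by (pose proof (Cmod_ge_0 u); lra).
  assert (HuN : Cmod (Cpow u N) <= q ^ N).
  { rewrite Cmod_pow. apply pow_incr. split; [apply Cmod_ge_0 | exact Hu]. }
  assert (HqN : q ^ N <= 1) by (rewrite <- (pow1 N); apply pow_incr; lra).
  assert (Hc : 1 - q <= c) by (pose proof (Cmod_1_minus_bounds u); unfold c; lra).
  pose proof (Cmod_1_minus_bounds (Cpow u N)) as Hw. fold w in Hw.
  assert (Hw1 : Rabs (w - 1) <= q ^ N) by (apply Rabs_le; lra).
  assert (Hsum : Cmod (csum (Cpow u) N) = w / c).
  { unfold w, c. rewrite <- geom_csum_mul, Cmod_mult. field. fold c. lra. }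
  rewrite Hsum. replace ((w / c) ^ 2 - / c ^ 2) with ((w - 1) * (w + 1) * / c ^ 2)
    by (field; lra).
  rewrite !Rabs_mult, (Rabs_right (w + 1)), (Rabs_right (/ c ^ 2)).
  - replace (3 / (1 - q) ^ 2 * q ^ N) with (q ^ N * 3 * / (1 - q) ^ 2) by (field; lra).
    apply Rmult_le_compat.
    + apply Rmult_le_pos; [apply Rabs_pos | lra].
    + apply Rlt_le, Rinv_0_lt_compat, pow_lt. lra.
    + apply Rmult_le_compat; [apply Rabs_pos | lra | exact Hw1 | lra].
    + apply Rinv_le_contravar; [apply pow_lt; lra | apply pow_incr; lra].
  - apply Rle_ge, Rlt_le, Rinv_0_lt_compat, pow_lt. lra.
  - lra.
Qed.

Lemma filterlim_RtoC (u : nat -> R) (l : R) :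
  is_lim_seq u l -> filterlim (fun n => RtoC (u n)) eventually (locally (RtoC l)).
Proof.
  intros Hu. apply (filterlim_C_of_bound _ _ (fun n => Rabs (u n - l))).
  - intros n. rewrite <- Cmod_R, RtoC_minus. lra.
  - apply (is_lim_seq_abs_0 (fun n => u n - l)).
    replace (Finite 0) with (Rbar_minus l l) by (simpl; f_equal; ring).
    exact (is_lim_seq_minus' _ _ _ _ Hu (is_lim_seq_const l)).
Qed.

Definition torus_ratio (r t1 t2 : R) : C := ((expi t1 + expi t2) * RtoC (/ r))%C.

Lemma spec_density_torus_ratio r t1 t2 : r <> 0 ->
  spec_density r t1 t2 = / Cmod (1 - torus_ratio r t1 t2) ^ 2.
Proof. intros Hr. unfold spec_density, p_poly, torus_ratio, Cdiv. rewrite RtoC_inv; auto. Qed.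

Lemma Cmod_torus_ratio r t1 t2 : 0 < r -> Cmod (torus_ratio r t1 t2) <= 2 / r.
Proof.
  intros Hr. unfold torus_ratio. rewrite Cmod_mult, Cmod_R, Rabs_right.
  - pose proof (Cmod_triangle (expi t1) (expi t2)) as H. rewrite !Cmod_expi in H.
    unfold Rdiv. apply Rmult_le_compat_r; [apply Rlt_le, Rinv_0_lt_compat|]; lra.
  - apply Rle_ge, Rlt_le, Rinv_0_lt_compat. exact Hr.
Qed.

Definition coef_integrand_approx (r : R) (N : nat) (k1 k2 : Z) (t1 t2 : R) : C :=
  (expi (- (IZR k1 * t1 + IZR k2 * t2))
   * RtoC (Cmod (csum (Cpow (torus_ratio r t1 t2)) N) ^ 2))%C.

Definition coef_approx (r : R) (k1 k2 : Z) (N : nat) : R :=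
  rsum (fun m => rsum (fun n => / r ^ m * / r ^ n * trig_coef m n k1 k2) N) N.

Lemma coef_integrand_approx_expand r N k1 k2 t1 t2 :
  coef_integrand_approx r N k1 k2 t1 t2 =
  csum (fun m => csum (fun n => RtoC (/ r ^ m * / r ^ n) * trig_mono m n k1 k2 t1 t2) N)%C N.
Proof.
  unfold coef_integrand_approx. rewrite Cmod2_conj, Cconj_csum, csum_mult_r, csum_mult_l.
  apply csum_ext. intros m. rewrite csum_mult_l, (csum_mult_l (expi _)).
  apply csum_ext. intros n.
  unfold torus_ratio, trig_mono.
  rewrite Cpow_conj, Cmult_conj, Cplus_conj, !Cconj_expi.
  replace (Cconj (RtoC (/ r))) with (RtoC (/ r)) by (unfold Cconj, RtoC; simpl; f_equal; ring).
  rewrite !Cpow_mult_l, <- !RtoC_pow, !pow_inv, RtoC_mult.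
  ring.
Qed.

Lemma is_RInt_torus_coef_integrand_approx r N k1 k2 :
  is_RInt_torus (coef_integrand_approx r N k1 k2) (RtoC (4 * PI ^ 2 * coef_approx r k1 k2 N)).
Proof.
  eapply is_RInt_torus_ext.
  { intros t1 t2. symmetry. apply coef_integrand_approx_expand. }
  replace (RtoC (4 * PI ^ 2 * coef_approx r k1 k2 N)) with
    (csum (fun m => csum (fun n =>
       RtoC (/ r ^ m * / r ^ n) * RtoC (4 * PI ^ 2 * trig_coef m n k1 k2)) N) N)%C.
  - apply is_RInt_torus_csum. intros m. apply is_RInt_torus_csum. intros n.
    apply is_RInt_torus_Cmult_l, is_RInt_torus_trig_mono.
  - unfold coef_approx. rewrite RtoC_mult, RtoC_rsum, csum_mult_l. apply csum_ext. intros m.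
    rewrite RtoC_rsum, csum_mult_l. apply csum_ext. intros n.
    rewrite !RtoC_mult. ring.
Qed.

Lemma two_div_bounds r : 2 < r -> 0 < 2 / r < 1.
Proof.
  intros Hr. split; [apply Rdiv_lt_0_compat; lra|].
  apply (Rmult_lt_reg_r r); [lra|]. unfold Rdiv. rewrite Rmult_assoc, Rinv_l; lra.
Qed.

Lemma fourier_coef_of_lim r k1 k2 (L : R) : 2 < r ->
  is_lim_seq (coef_approx r k1 k2) L -> fourier_coef r k1 k2 = RtoC L.
Proof.
  intros Hr HL. pose proof (two_div_bounds r Hr) as Hq.
  set (f := fun t1 t2 => (expi (- (IZR k1 * t1 + IZR k2 * t2)) * RtoC (spec_density r t1 t2))%C).
  set (eps := fun N => 3 / (1 - 2 / r) ^ 2 * (2 / r) ^ N).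
  assert (Hbound : forall N t1 t2,
             Cmod (coef_integrand_approx r N k1 k2 t1 t2 - f t1 t2) <= eps N).
  { intros N t1 t2. unfold coef_integrand_approx, f, eps.
    replace (_ - _)%C with (expi (- (IZR k1 * t1 + IZR k2 * t2)) *
      RtoC (Cmod (csum (Cpow (torus_ratio r t1 t2)) N) ^ 2 - spec_density r t1 t2))%C
      by (rewrite RtoC_minus; ring).
    rewrite Cmod_mult, Cmod_expi, Rmult_1_l, Cmod_R, spec_density_torus_ratio by lra.
    apply Rabs_Cmod_geom_csum_sqr. split; [apply Cmod_torus_ratio|]; lra. }
  assert (Heps : is_lim_seq eps 0).
  { replace (Finite 0) with (Rbar_mult (3 / (1 - 2 / r) ^ 2) 0) by (simpl; f_equal; ring).
    apply is_lim_seq_scal_l, is_lim_seq_geom. rewrite Rabs_right; lra. }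
  assert (Happrox := is_RInt_torus_unif_lim f _ _ eps
    (fun N => is_RInt_torus_coef_integrand_approx r N k1 k2) Hbound Heps).
  assert (Hexact : filterlim (fun N => RtoC (4 * PI ^ 2 * coef_approx r k1 k2 N))
                     eventually (locally (RtoC (4 * PI ^ 2 * L)))).
  { apply filterlim_RtoC. exact (is_lim_seq_scal_l _ (4 * PI ^ 2) L HL). }
  pose proof (filterlim_locally_unique _ _ _ Happrox Hexact) as E.
  unfold f in E. cbv beta in E.
  unfold fourier_coef. rewrite E, <- RtoC_mult.
  f_equal. field. apply PI_neq0.
Qed.

(** * Reduction to a diagonal series *)

Lemma rsum_ext f g N : (forall i, (i < N)%nat -> f i = g i) -> rsum f N = rsum g N.
Proof.
  induction N as [|N IH]; intros H; simpl; [reflexivity|].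
  rewrite IH, H; [reflexivity | lia | intros i Hi; apply H; lia].
Qed.

Lemma rsum_indicator (x : nat -> R) j N :
  rsum (fun n => if Nat.eqb n j then x n else 0) N = if Nat.ltb j N then x j else 0.
Proof.
  induction N as [|N IH]; simpl.
  - destruct (Nat.ltb_spec j 0); [lia | reflexivity].
  - rewrite IH. destruct (Nat.eqb_spec N j), (Nat.ltb_spec j N), (Nat.ltb_spec j (S N));
      subst; try lia; ring.
Qed.

Lemma rsum_shift (h : nat -> R) D N :
  rsum (fun m => if Nat.leb D m then h (m - D)%nat else 0) N = rsum h (N - D).
Proof.
  induction N as [|N IH]; [reflexivity|]. cbn [rsum]. rewrite IH.
  destruct (Nat.leb_spec D N).
  - replace (S N - D)%nat with (S (N - D)) by lia. reflexivity.
  - replace (S N - D)%nat with 0%nat by lia. replace (N - D)%nat with 0%nat by lia.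
    simpl. ring.
Qed.

Lemma rsum_trunc (h : nat -> R) K N :
  rsum (fun m => if Nat.ltb m K then h m else 0) N = rsum h (Nat.min K N).
Proof.
  induction N as [|N IH]; cbn [rsum]; [rewrite Nat.min_0_r; reflexivity|]. rewrite IH.
  destruct (Nat.ltb_spec N K).
  - replace (Nat.min K (S N)) with (S N) by lia. replace (Nat.min K N) with N by lia.
    reflexivity.
  - replace (Nat.min K (S N)) with (Nat.min K N) by lia. ring.
Qed.

Lemma is_lim_seq_rsum_shift (A t : nat -> R) D :
  (forall N, A N = rsum t (N - D)) -> ex_series t -> is_lim_seq A (Series t).
Proof.
  intros HA Ht. apply (is_lim_seq_incr_n A (S D)).
  apply (is_lim_seq_ext (sum_n t)); [|exact (Series_correct _ Ht)].
  intros n. rewrite HA. replace (n + S D - D)%nat with (S n) by lia.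
  induction n as [|n IH].
  - rewrite sum_O. simpl. ring.
  - rewrite sum_Sn, IH. reflexivity.
Qed.

Definition diag_term (r : R) (D : nat) (j : Z) (s : nat) : R :=
  / r ^ (2 * s + D) * binz (2 * s + D) (Z.of_nat s + j).

Lemma coef_approx_sum_nonneg r k1 k2 D N : r <> 0 -> (k1 + k2 = Z.of_nat D)%Z ->
  coef_approx r k1 k2 N = rsum (diag_term r D k1) (N - D).
Proof.
  intros Hr Hd. unfold coef_approx. rewrite <- rsum_shift. apply rsum_ext. intros m Hm.
  (* only the term n = m - D of the inner sum survives *)
  transitivity (rsum (fun n => if Nat.eqb n (m - D)
                               then (if Nat.leb D m then diag_term r D k1 (m - D) else 0)
                               else 0) N).
  - apply rsum_ext. intros n Hn. unfold trig_coef.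
    destruct (Z.eqb_spec (Z.of_nat m - Z.of_nat n) (k1 + k2)).
    + replace n with (m - D)%nat by lia.
      rewrite Nat.eqb_refl. destruct (Nat.leb_spec D m); [|lia].
      unfold diag_term. replace (2 * (m - D) + D)%nat with (m + (m - D))%nat by lia.
      rewrite !pow_add, !Rinv_mult. ring.
    + destruct (Nat.eqb_spec n (m - D)), (Nat.leb_spec D m); lia || ring.
  - rewrite rsum_indicator. destruct (Nat.ltb_spec (m - D) N); [reflexivity | lia].
Qed.

Lemma coef_approx_sum_nonpos r k1 k2 D N : r <> 0 -> (k1 + k2 = - Z.of_nat D)%Z ->
  coef_approx r k1 k2 N = rsum (diag_term r D (- k2)) (N - D).
Proof.
  intros Hr Hd. unfold coef_approx.
  replace (N - D)%nat with (Nat.min (N - D) N) by lia.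
  rewrite <- rsum_trunc. apply rsum_ext. intros m Hm.
  transitivity (rsum (fun n => if Nat.eqb n (m + D) then diag_term r D (- k2) m else 0) N).
  - apply rsum_ext. intros n Hn. unfold trig_coef.
    destruct (Z.eqb_spec (Z.of_nat m - Z.of_nat n) (k1 + k2)).
    + replace n with (m + D)%nat by lia. rewrite Nat.eqb_refl.
      unfold diag_term. replace (2 * m + D)%nat with (m + (m + D))%nat by lia.
      replace (Z.of_nat m + - k2)%Z with (Z.of_nat (m + D) + k1)%Z by lia.
      rewrite !pow_add, !Rinv_mult. ring.
    + destruct (Nat.eqb_spec n (m + D)); lia || ring.
  - rewrite rsum_indicator.
    destruct (Nat.ltb_spec (m + D) N), (Nat.ltb_spec m (N - D)); lia || reflexivity.
Qed.

Lemma diag_term_bounds r D j s : 0 < r ->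
  0 <= diag_term r D j s <= (2 / r) ^ D * ((2 / r) ^ 2) ^ s.
Proof.
  intros Hr. unfold diag_term.
  assert (Hp : 0 < / r ^ (2 * s + D)) by (apply Rinv_0_lt_compat, pow_lt; lra).
  pose proof (binz_bounds (2 * s + D) (Z.of_nat s + j)) as [H0 H2].
  split; [apply Rmult_le_pos; lra|].
  replace ((2 / r) ^ D * ((2 / r) ^ 2) ^ s) with (/ r ^ (2 * s + D) * 2 ^ (2 * s + D)).
  - apply Rmult_le_compat_l; lra.
  - rewrite <- pow_mult, <- pow_add, Nat.add_comm. unfold Rdiv.
    rewrite Rpow_mult_distr, pow_inv. ring.
Qed.

Lemma ex_series_diag_term r D j : 2 < r -> ex_series (diag_term r D j).
Proof.
  intros Hr. pose proof (two_div_bounds r Hr) as Hq.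
  apply (ex_series_le (V := R_CompleteNormedModule) _
           (fun s => (2 / r) ^ D * ((2 / r) ^ 2) ^ s)).
  - intros s. destruct (diag_term_bounds r D j s) as [H0 H1]; [lra|].
    change (norm _) with (Rabs (diag_term r D j s)). rewrite Rabs_right; lra.
  - apply (ex_series_scal_l (V := R_CompleteNormedModule)), ex_series_geom.
    rewrite Rabs_right; simpl; nra.
Qed.

Lemma diag_term_sym r D j s : diag_term r D j s = diag_term r D (Z.of_nat D - j) s.
Proof.
  unfold diag_term.
  rewrite binz_sym. do 2 f_equal. lia.
Qed.

Lemma fourier_coef_sum_nonneg r k1 k2 D : 2 < r -> (k1 + k2 = Z.of_nat D)%Z ->
  fourier_coef r k1 k2 = RtoC (Series (diag_term r D k1)).
Proof.
  intros Hr Hd. apply fourier_coef_of_lim; [exact Hr|].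
  apply (is_lim_seq_rsum_shift _ _ D).
  - intros N. apply coef_approx_sum_nonneg; [lra | exact Hd].
  - apply ex_series_diag_term, Hr.
Qed.

Lemma fourier_coef_sum_nonpos r k1 k2 D : 2 < r -> (k1 + k2 = - Z.of_nat D)%Z ->
  fourier_coef r k1 k2 = RtoC (Series (diag_term r D (- k1))).
Proof.
  intros Hr Hd. replace (- k1)%Z with (Z.of_nat D - - k2)%Z by lia.
  rewrite <- (Series_ext _ _ (diag_term_sym r D (- k2))).
  apply fourier_coef_of_lim; [exact Hr|].
  apply (is_lim_seq_rsum_shift _ _ D).
  - intros N. apply coef_approx_sum_nonpos; [lra | exact Hd].
  - apply ex_series_diag_term, Hr.
Qed.

Lemma fourier_coef_diag r k1 k2 : 2 < r -> exists (D : nat) (j : Z),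
  Z.abs_nat j = Z.abs_nat k1 /\ Z.abs_nat (Z.of_nat D - j) = Z.abs_nat k2 /\
  (j * (Z.of_nat D - j) = k1 * k2)%Z /\ fourier_coef r k1 k2 = RtoC (Series (diag_term r D j)).
Proof.
  intros Hr. destruct (Z_le_gt_dec 0 (k1 + k2)) as [Hsum|Hsum].
  - exists (Z.to_nat (k1 + k2)), k1.
    rewrite Z2Nat.id by lia. replace (k1 + k2 - k1)%Z with k2 by ring.
    repeat split; try lia. apply (fourier_coef_sum_nonneg r k1 k2 _ Hr). lia.
  - exists (Z.to_nat (- (k1 + k2))), (- k1)%Z.
    rewrite Z2Nat.id by lia. replace (- (k1 + k2) - - k1)%Z with (- k2)%Z by ring.
    repeat split; try lia.
    apply (fourier_coef_sum_nonpos r k1 k2 _ Hr). lia.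
Qed.

(** * The diagonal series for opposite signs *)

Definition diag_series (r : R) (K : nat) : R := Series (diag_term r K 0).

Lemma diag_series_nonpos r D j : (j <= 0)%Z ->
  Series (diag_term r D j) = diag_series r (D + 2 * Z.abs_nat j).
Proof.
  intros Hj. unfold diag_series.
  rewrite (Series_incr_n_aux (diag_term r D j) (Z.abs_nat j)).
  - apply Series_ext. intros s. unfold diag_term.
    replace (2 * (Z.abs_nat j + s) + D)%nat with (2 * s + (D + 2 * Z.abs_nat j))%nat by lia.
    replace (Z.of_nat (Z.abs_nat j + s) + j)%Z with (Z.of_nat s + 0)%Z by lia.
    reflexivity.
  - intros s Hs. unfold diag_term. rewrite binz_neg by lia. ring.
Qed.

Lemma diag_series_opposite_signs r D j : (j * (Z.of_nat D - j) <= 0)%Z ->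
  Series (diag_term r D j) = diag_series r (Z.abs_nat j + Z.abs_nat (Z.of_nat D - j)).
Proof.
  intros Hj. destruct (Z_le_gt_dec j 0) as [Hj0|Hj0].
  - rewrite diag_series_nonpos by exact Hj0. f_equal. lia.
  - rewrite (Series_ext _ _ (diag_term_sym r D j)), diag_series_nonpos by nia.
    f_equal. lia.
Qed.

Lemma diag_series_bounds r K : 2 < r ->
  0 <= diag_series r K <= (2 / r) ^ K / (1 - (2 / r) ^ 2).
Proof.
  intros Hr. pose proof (two_div_bounds r Hr) as Hq.
  assert (Hq2 : 0 <= (2 / r) ^ 2 < 1) by (simpl; nra).
  assert (Hb := fun s => diag_term_bounds r K 0 s ltac:(lra)).
  assert (Hgeom : is_series (fun s => (2 / r) ^ K * ((2 / r) ^ 2) ^ s)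
                            ((2 / r) ^ K / (1 - (2 / r) ^ 2))).
  { apply (is_series_scal_l (V := R_CompleteNormedModule)), is_series_geom.
    rewrite Rabs_right; lra. }
  unfold diag_series. split.
  - replace 0 with (Series (fun _ => 0 * 1)) by (rewrite Series_scal_l; ring).
    apply Series_le; [|apply ex_series_diag_term; lra].
    intros s. pose proof (Hb s). lra.
  - rewrite <- (is_series_unique _ _ Hgeom).
    apply Series_le; [apply Hb | exists ((2 / r) ^ K / (1 - (2 / r) ^ 2)); exact Hgeom].
Qed.

Lemma diag_series_rec r K : 2 < r ->
  r * diag_series r (S K) = diag_series r K + diag_series r (S (S K)).
Proof.
  intros Hr.
  (* Pascal's rule; the series of the second half is [diag_series r (K + 2)]. *)
  assert (Hsplit : forall s, diag_term r (S K) 0 s =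
                             / r * diag_term r K 0 s + / r * diag_term r K (-1) s).
  { intros s. unfold diag_term. replace (2 * s + S K)%nat with (S (2 * s + K)) by lia.
    cbn [binz pow]. rewrite Rinv_mult.
    replace (Z.of_nat s + 0 - 1)%Z with (Z.of_nat s + -1)%Z by ring. ring. }
  assert (Hex : forall j, ex_series (fun s => / r * diag_term r K j s))
    by (intros j; apply (ex_series_scal_l (V := R_CompleteNormedModule)),
          ex_series_diag_term; lra).
  replace (S (S K)) with (K + 2 * Z.abs_nat (-1))%nat by (simpl; lia).
  rewrite <- diag_series_nonpos by lia.
  unfold diag_series. rewrite (Series_ext _ _ Hsplit), Series_plus by apply Hex.
  rewrite !Series_scal_l. field. lra.
Qed.

Lemma diag_series_0 r : 2 < r -> diag_series r 0 = 1 + 2 / r * diag_series r 1.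
Proof.
  intros Hr. unfold diag_series.
  rewrite Series_incr_1 by (apply ex_series_diag_term; lra).
  rewrite <- Series_scal_l. f_equal.
  - unfold diag_term. simpl. field.
  - apply Series_ext. intros s. unfold diag_term.
    replace (2 * S s + 0)%nat with (S (2 * s + 1)) by lia.
    cbn [binz pow]. rewrite (binz_sym (2 * s + 1) (Z.of_nat (S s) + 0)).
    replace (Z.of_nat (2 * s + 1) - (Z.of_nat (S s) + 0))%Z with (Z.of_nat s + 0)%Z by lia.
    replace (Z.of_nat (S s) + 0 - 1)%Z with (Z.of_nat s + 0)%Z by lia.
    rewrite Rinv_mult. unfold Rdiv. ring.
Qed.

Lemma Rabs_le_geom_eq_0 (x c q : R) : Rabs q < 1 -> (forall n, Rabs x <= c * q ^ n) -> x = 0.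
Proof.
  intros Hq Hx. apply Rabs_eq_0, Rle_antisym; [|apply Rabs_pos].
  assert (Hlim : is_lim_seq (fun n => c * q ^ n) (Rbar_mult c 0))
    by exact (is_lim_seq_scal_l _ c 0 (is_lim_seq_geom q Hq)).
  rewrite Rbar_mult_0_r in Hlim.
  exact (is_lim_seq_le _ _ (Rabs x) 0 Hx (is_lim_seq_const _) Hlim).
Qed.

Lemma pow_add_le_pow q m n : 0 <= q <= 1 -> q ^ (m + n) <= q ^ n.
Proof.
  intros Hq. rewrite pow_add. rewrite <- (Rmult_1_l (q ^ n)) at 2.
  apply Rmult_le_compat_r; [apply pow_le; lra|].
  rewrite <- (pow1 m). apply pow_incr. exact Hq.
Qed.

Lemma small_root_spec r : 2 < r ->
  let rho := r / 2 - sqrt (r ^ 2 / 4 - 1) in rho * (r - rho) = 1 /\ 0 < rho <= 1.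
Proof.
  intros Hr rho.
  assert (Hsq : sqrt (r ^ 2 / 4 - 1) * sqrt (r ^ 2 / 4 - 1) = r ^ 2 / 4 - 1)
    by (apply sqrt_sqrt; simpl; nra).
  assert (0 < sqrt (r ^ 2 / 4 - 1)) by (apply sqrt_lt_R0; simpl; nra).
  set (s := sqrt (r ^ 2 / 4 - 1)) in *. unfold rho. simpl in Hsq.
  repeat split.
  - nra.
  - assert (s < r / 2) by nra. lra.
  - assert (r / 2 - 1 <= s) by nra. lra.
Qed.

Lemma diag_series_ratio r K : 2 < r ->
  diag_series r (S K) = (r / 2 - sqrt (r ^ 2 / 4 - 1)) * diag_series r K.
Proof.
  intros Hr. destruct (small_root_spec r Hr) as [Hrho Hrho1].
  set (rho := r / 2 - sqrt (r ^ 2 / 4 - 1)) in *.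
  pose proof (two_div_bounds r Hr) as Hq. set (q := 2 / r) in *.
  set (d := fun K => diag_series r (S K) - rho * diag_series r K).
  (* [d K = rho * d (S K)] by the recurrence, while [d] decays like [(2/r)^K] and [rho <= 1]. *)
  assert (Hd : forall K n, d K = rho ^ n * d (K + n)%nat).
  { intros K0 n. induction n as [|n IH]; [simpl; rewrite Nat.add_0_r; ring|].
    rewrite IH. unfold d. replace (K0 + S n)%nat with (S (K0 + n)) by lia.
    pose proof (diag_series_rec r (K0 + n) Hr).
    replace (diag_series r (S (S (K0 + n))))
      with (r * diag_series r (S (K0 + n)) - diag_series r (K0 + n)) by lra.
    rewrite <- (Rmult_1_l (diag_series r (S (K0 + n)))) at 1. rewrite <- Hrho.
    simpl pow. ring. }
  assert (Hbound : forall n, Rabs (d K) <= 2 / (1 - q ^ 2) * q ^ n).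
  { intros n. rewrite (Hd K n), Rabs_mult, Rabs_right by (apply Rle_ge, pow_le; lra).
    assert (Hrn : 0 <= rho ^ n <= 1)
      by (split; [apply pow_le | rewrite <- (pow1 n); apply pow_incr]; lra).
    destruct (diag_series_bounds r (K + n) Hr) as [B1 B2].
    destruct (diag_series_bounds r (S (K + n)) Hr) as [B3 B4]. fold q in B2, B4.
    assert (Hpow : forall m, q ^ (m + n) / (1 - q ^ 2) <= q ^ n / (1 - q ^ 2)).
    { intros m. apply Rmult_le_compat_r; [apply Rlt_le, Rinv_0_lt_compat; simpl; nra|].
      apply pow_add_le_pow. lra. }
    pose proof (Hpow K). pose proof (Hpow (S K)) as HS. simpl Nat.add in HS.
    assert (0 <= rho * diag_series r (K + n) <= diag_series r (K + n)) by nra.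
    assert (Habs : Rabs (d (K + n)%nat) <= 2 * (q ^ n / (1 - q ^ 2)))
      by (unfold d; apply Rabs_le; lra).
    unfold Rdiv in *. nra. }
  assert (Hd0 : d K = 0).
  { apply (Rabs_le_geom_eq_0 _ (2 / (1 - q ^ 2)) q); [rewrite Rabs_right; lra | exact Hbound]. }
  unfold d in Hd0. lra.
Qed.

Lemma sqrt_1_minus_4_div_sqr r : 2 < r ->
  sqrt (1 - 4 / r ^ 2) = 2 * sqrt (r ^ 2 / 4 - 1) / r.
Proof.
  intros Hr.
  assert (Hsq : sqrt (r ^ 2 / 4 - 1) * sqrt (r ^ 2 / 4 - 1) = r ^ 2 / 4 - 1)
    by (apply sqrt_sqrt; simpl; nra).
  assert (0 < sqrt (r ^ 2 / 4 - 1)) by (apply sqrt_lt_R0; simpl; nra).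
  rewrite <- (sqrt_pow2 (2 * sqrt (r ^ 2 / 4 - 1) / r)).
  - f_equal. replace ((2 * sqrt (r ^ 2 / 4 - 1) / r) ^ 2)
      with (4 * (sqrt (r ^ 2 / 4 - 1) * sqrt (r ^ 2 / 4 - 1)) / r ^ 2) by (field; lra).
    rewrite Hsq. field. lra.
  - apply Rlt_le, Rdiv_lt_0_compat; lra.
Qed.

Lemma diag_series_closed_form r K : 2 < r ->
  diag_series r K = / sqrt (1 - 4 / r ^ 2) * (r / 2 - sqrt (r ^ 2 / 4 - 1)) ^ K.
Proof.
  intros Hr.
  assert (HK : diag_series r K = (r / 2 - sqrt (r ^ 2 / 4 - 1)) ^ K * diag_series r 0).
  { induction K as [|K IH]; [simpl; ring|]. rewrite diag_series_ratio, IH by exact Hr.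
    simpl. ring. }
  assert (H0 := diag_series_0 r Hr). rewrite (diag_series_ratio r 0 Hr) in H0.
  rewrite HK, sqrt_1_minus_4_div_sqr by exact Hr.
  assert (0 < sqrt (r ^ 2 / 4 - 1)) by (apply sqrt_lt_R0; simpl; nra).
  set (s := sqrt (r ^ 2 / 4 - 1)) in *. set (h := diag_series r 0) in *.
  replace (2 / r * ((r / 2 - s) * h)) with (h - 2 * s / r * h) in H0 by (field; lra).
  replace h with (/ (2 * s / r)).
  - ring.
  - rewrite <- (Rmult_1_r (/ _)). replace 1 with (2 * s / r * h) by lra.
    field. split; lra.
Qed.

(** * The hypergeometric form *)

Lemma poch_1 n : poch 1 n = INR (fact n).
Proof.
  induction n as [|n IH]; [reflexivity|].
  simpl poch. rewrite IH, fact_simpl, mult_INR, S_INR. ring.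
Qed.

Lemma poch_INR_succ a n : poch (INR a + 1) n = INR (fact (a + n)) / INR (fact a).
Proof.
  pose proof (INR_fact_neq_0 a).
  induction n as [|n IH]; simpl poch.
  - rewrite Nat.add_0_r. field. assumption.
  - rewrite IH, Nat.add_succ_r, fact_simpl, mult_INR, S_INR, plus_INR. field. assumption.
Qed.

Lemma poch_half_mul K n :
  poch (INR K / 2 + 1) n * poch ((INR K + 1) / 2) n * 4 ^ n
  = INR (fact (K + 2 * n)) / INR (fact K).
Proof.
  pose proof (INR_fact_neq_0 K).
  induction n as [|n IH]; simpl poch.
  - rewrite Nat.add_0_r. field. assumption.
  - transitivity (poch (INR K / 2 + 1) n * poch ((INR K + 1) / 2) n * 4 ^ n *
                  ((INR K / 2 + 1 + INR n) * ((INR K + 1) / 2 + INR n) * 4));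
      [simpl pow; ring|].
    rewrite IH. replace (K + 2 * S n)%nat with (S (S (K + 2 * n))) by lia.
    rewrite (fact_simpl (S (K + 2 * n))), (fact_simpl (K + 2 * n)), !mult_INR, !S_INR,
      plus_INR, mult_INR.
    simpl INR. field. assumption.
Qed.

Lemma diag_series_hypergeometric r K1 K2 : 2 < r ->
  Series (diag_term r (K1 + K2) (Z.of_nat K1)) =
  Binomial.C (K1 + K2) K1 / r ^ (K1 + K2) *
  hyp3F2 1 (INR (K1 + K2) / 2 + 1) ((INR (K1 + K2) + 1) / 2) (INR K1 + 1) (INR K2 + 1)
    (4 / r ^ 2).
Proof.
  intros Hr. unfold hyp3F2. rewrite <- Series_scal_l. apply Series_ext. intros n.
  set (K := (K1 + K2)%nat).
  unfold diag_term. replace (Z.of_nat n + Z.of_nat K1)%Z with (Z.of_nat (n + K1)) by lia.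
  rewrite binz_binomial by (unfold K; lia).
  rewrite !poch_INR_succ.
  replace (poch 1 n * poch (INR K / 2 + 1) n * poch ((INR K + 1) / 2) n)
    with (poch 1 n * (poch (INR K / 2 + 1) n * poch ((INR K + 1) / 2) n * 4 ^ n) / 4 ^ n)
    by (field; apply pow_nonzero; lra).
  rewrite poch_half_mul, poch_1.
  unfold Binomial.C.
  replace (2 * n + K - (n + K1))%nat with (K2 + n)%nat by (unfold K; lia).
  replace (K - K1)%nat with K2 by (unfold K; lia).
  replace (K + 2 * n)%nat with (2 * n + K)%nat by lia.
  replace (n + K1)%nat with (K1 + n)%nat by lia.
  rewrite pow_add, pow_mult. unfold Rdiv. rewrite Rpow_mult_distr, pow_inv.
  assert (r ^ K <> 0) by (apply pow_nonzero; lra).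
  assert ((r ^ 2) ^ n <> 0) by (apply pow_nonzero, pow_nonzero; lra).
  assert (4 ^ n <> 0) by (apply pow_nonzero; lra).
  pose proof (INR_fact_neq_0 n). pose proof (INR_fact_neq_0 K).
  pose proof (INR_fact_neq_0 K1). pose proof (INR_fact_neq_0 K2).
  pose proof (INR_fact_neq_0 (K1 + n)). pose proof (INR_fact_neq_0 (K2 + n)).
  pose proof (INR_fact_neq_0 (2 * n + K)).
  field. repeat split; assumption.
Qed.

Theorem theorem1 (r : R) (hr : 2 < r) (k1 k2 : Z) :
  let a1 := Z.abs_nat k1 in
  let a2 := Z.abs_nat k2 in
  ((k1 * k2 <= 0)%Z ->
     fourier_coef r k1 k2 =
     RtoC (/ sqrt (1 - 4 / r ^ 2) * (r / 2 - sqrt (r ^ 2 / 4 - 1)) ^ (a1 + a2)))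
  /\
  ((0 < k1 * k2)%Z ->
     fourier_coef r k1 k2 =
     RtoC (Binomial.C (a1 + a2) a1 / r ^ (a1 + a2) *
           hyp3F2 1 (INR (a1 + a2) / 2 + 1) ((INR (a1 + a2) + 1) / 2)
                  (INR a1 + 1) (INR a2 + 1) (4 / r ^ 2))).
Proof.
  intros a1 a2.
  destruct (fourier_coef_diag r k1 k2 hr) as (D & j & Hj & HDj & Hprod & ->).
  split; intros Hk.
  - rewrite diag_series_opposite_signs, diag_series_closed_form, Hj, HDj by lia || exact hr.
    reflexivity.
  - assert (HD : D = (a1 + a2)%nat) by lia.
    assert (Ej : j = Z.of_nat a1) by lia.
    rewrite HD, Ej, diag_series_hypergeometric by exact hr. reflexivity.
Qed.
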